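(* Let $(X,\pi)$ be a finite symmetric two-player game with relative payoff game $(X,\Delta)$. If $X$ is a totally ordered set and $\Delta$ has increasing differences, or has decreasing differences, or is a valuation, then imitation is essentially unbeatable.
   Context: $\pi(x,y)$ is the payoff of the player choosing $x$ against $y$. Relative payoff: $\Delta(x,y)=\pi(x,y)-\pi(y,x)$. For totally ordered $X$, $\Delta$ has decreasing (resp. increasing) differences if for all $x''>x'$ and $y''>y'$ in $X$, $\Delta(x'',y'')-\Delta(x',y'')\le$ (resp. $\ge$) $\Delta(x'',y')-\Delta(x',y')$; $\Delta$ is a valuation if it has both. Let $\hat\Delta:=\max_{x,y\in X}\Delta(x,y)$. Imitate-the-best: given initial $y_0\in X$ and any opponent sequence $(x_t)_{t\ge0}$, $y_t=x_{t-1}$ if $\Delta(x_{t-1},y_{t-1})>0$ and $y_t=y_{t-1}$ otherwise. Imitation is essentially unbeatable if for every $y_0\in X$ and every sequence $(x_t)$, $\limsup_{T\to\infty}\sum_{t=0}^T\Delta(x_t,y_t)\le\hat\Delta$. *)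

From mathcomp Require Import all_boot all_order all_algebra.
From mathcomp Require Import all_classical all_reals all_analysis.
Set Implicit Arguments. Unset Strict Implicit. Unset Printing Implicit Defensive.
Import Order.TTheory GRing.Theory Num.Theory.
Local Open Scope ring_scope.

Section Game.
Variables (R : realType) (d : Order.disp_t) (X : finOrderType d).

Definition relpay (pi : X -> X -> R) (x y : X) : R := pi x y - pi y x.

Definition decreasing_differences (D : X -> X -> R) : Prop :=
  forall x' x'' y' y'' : X, (x' < x'')%O -> (y' < y'')%O ->
    D x'' y'' - D x' y'' <= D x'' y' - D x' y'.

Definition increasing_differences (D : X -> X -> R) : Prop :=
  forall x' x'' y' y'' : X, (x' < x'')%O -> (y' < y'')%O ->
    D x'' y'' - D x' y'' >= D x'' y' - D x' y'.

Definition valuation (D : X -> X -> R) : Prop :=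
  decreasing_differences D /\ increasing_differences D.

(* hatDelta = max_{x,y} D x y ; z is any element (used as the seed of the
   maximum over the nonempty finite set X*X; the value does not depend on z) *)
Definition hatDelta (D : X -> X -> R) (z : X) : R :=
  \big[Num.max/D z z]_(p : X * X) D p.1 p.2.

Fixpoint imitate (D : X -> X -> R) (y0 : X) (x : nat -> X) (t : nat) : X :=
  match t with
  | 0 => y0
  | t'.+1 => let y := imitate D y0 x t' in
             if 0 < D (x t') y then x t' else y
  end.

Definition essentially_unbeatable (D : X -> X -> R) : Prop :=
  forall (y0 : X) (x : nat -> X),
    (limn_esup (fun T : nat =>
       ((\sum_(t < T.+1) D (x t) (imitate D y0 x t))%:E)) <= (hatDelta D y0)%:E)%E.

End Game.

(* The relative payoff is antisymmetric: Delta y x = - Delta x y. Applying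
   decreasing (resp. increasing) differences with the roles of the two
   arguments swapped therefore yields the opposite inequality, so Delta is a
   valuation, and then Delta x y = f x - f y for the potential
   f := Delta (.) y0. Against the potential every imitation step gains at most
   f y_(t+1) - f y_t (a switch gains exactly that, a non-switch happens only
   when Delta x_t y_t <= 0), so the partial sums telescope to at most
   f y_(T+1) - f y_0 = Delta y_(T+1) y_0 <= hatDelta. *)

From mathcomp Require Import all_boot all_order all_algebra.
From mathcomp Require Import all_classical all_reals all_analysis.
From mathcomp Require Import lra.
Set Implicit Arguments. Unset Strict Implicit. Unset Printing Implicit Defensive.
Import Order.TTheory GRing.Theory Num.Theory.
Local Open Scope ring_scope.

Lemma limn_esup_le_ub (R : realType) (u : (\bar R)^nat) (c : \bar R) :
  (forall n, (u n <= c)%E) -> (limn_esup u <= c)%E.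
Proof.
move=> uc; rewrite limn_esup_lim; apply: lime_le; first exact: is_cvg_esups.
by apply: nearW => m; apply: ge_ereal_sup => _ [n _ <-].
Qed.

Section Game.
Variables (R : realType) (d : Order.disp_t) (X : finOrderType d).

Lemma relpayN (pi : X -> X -> R) x y : relpay pi y x = - relpay pi x y.
Proof. by rewrite /relpay opprB. Qed.

Lemma le_hatDelta (D : X -> X -> R) z x y : D x y <= hatDelta D z.
Proof. by rewrite /hatDelta (bigD1 (x, y)) //= le_max lexx. Qed.

Definition constant_differences (D : X -> X -> R) : Prop :=
  forall x' x'' y' y'' : X, D x'' y'' - D x' y'' = D x'' y' - D x' y'.

Lemma valuation_constant_differences (D : X -> X -> R) :
  valuation D -> constant_differences D.
Proof.
case=> dec inc.
have eq_lt x' x'' y' y'' (hx : (x' < x'')%O) (hy : (y' < y'')%O) :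
    D x'' y'' - D x' y'' = D x'' y' - D x' y'.
  by apply/le_anti; rewrite dec // inc.
(* Swapping x' with x'' (or y' with y'') negates both sides; equal indices
   make both sides vanish. *)
move=> x' x'' y' y''.
case: (ltgtP x' x'') => [hx|hx|->]; last lra.
- case: (ltgtP y' y'') => [hy|hy|->]; last lra; first exact: eq_lt.
  by have := eq_lt _ _ _ _ hx hy; lra.
- case: (ltgtP y' y'') => [hy|hy|->]; last lra;
  by have := eq_lt _ _ _ _ hx hy; lra.
Qed.

Section Antisymmetric.
Variable D : X -> X -> R.
Hypothesis DN : forall x y, D y x = - D x y.

Lemma antisym_diag x : D x x = 0.
Proof. by have := DN x x; lra. Qed.

Lemma antisym_decreasing_increasing :
  decreasing_differences D -> increasing_differences D.
Proof.
move=> dec x' x'' y' y'' hx hy; have := dec _ _ _ _ hy hx.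
by rewrite !(DN _ x'') !(DN _ x'); lra.
Qed.

Lemma antisym_increasing_decreasing :
  increasing_differences D -> decreasing_differences D.
Proof.
move=> inc x' x'' y' y'' hx hy; have := inc _ _ _ _ hy hx.
by rewrite !(DN _ x'') !(DN _ x'); lra.
Qed.

Hypothesis Dconst : constant_differences D.

Lemma constant_differences_potential z x y : D x y = D x z - D y z.
Proof. by have := Dconst z x z y; rewrite antisym_diag (DN y z); lra. Qed.

Lemma imitate_step y0 (x : nat -> X) t :
  D (x t) (imitate D y0 x t) <=
    D (imitate D y0 x t.+1) y0 - D (imitate D y0 x t) y0.
Proof.
rewrite /= (constant_differences_potential y0 (x t)).
case: ifP => [_|]; first by rewrite lexx.
move/negbT; rewrite -leNgt (constant_differences_potential y0) subrr; lra.
Qed.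

Lemma imitate_sum_le y0 (x : nat -> X) T :
  \sum_(t < T) D (x t) (imitate D y0 x t) <= D (imitate D y0 x T) y0.
Proof.
elim: T => [|T IH]; first by rewrite big_ord0 antisym_diag.
by rewrite big_ord_recr /=; have := imitate_step y0 x T; lra.
Qed.

Lemma constant_differences_unbeatable : essentially_unbeatable D.
Proof.
move=> y0 x; apply: limn_esup_le_ub => T; rewrite lee_fin.
exact: le_trans (imitate_sum_le y0 x T.+1) (le_hatDelta _ _ _ _).
Qed.

End Antisymmetric.
End Game.

Theorem corollary4 (R : realType) (d : Order.disp_t) (X : finOrderType d)
  (pi : X -> X -> R) :
  increasing_differences (relpay pi) \/ decreasing_differences (relpay pi)
    \/ valuation (relpay pi) ->
  essentially_unbeatable (relpay pi).
Proof.
have DN := relpayN pi.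
move=> H; have Dval : valuation (relpay pi).
  case: H => [inc|[dec|//]].
  - by split; [exact: antisym_increasing_decreasing|].
  - by split; [|exact: antisym_decreasing_increasing].
apply: (constant_differences_unbeatable DN).
exact: valuation_constant_differences.
Qed.
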